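(* Let $n\ge2$ and $\Delta\subset B_n$ a proper ideal. Then there is a subcomplex $\Delta'$ of $\Delta$ such that $g_i(\mathrm{Bier}(B_n,\Delta))=f_i(\Delta')$ for $0\le i\le\lfloor\frac{n-1}2\rfloor$ and $f_i(\Delta')=0$ for $i>\lfloor\frac{n-1}2\rfloor$. In particular $(g_0,g_1,\dots,g_{\lfloor(n-1)/2\rfloor})$ of $\mathrm{Bier}(B_n,\Delta)$ is a $K$-sequence and $g_i(\mathrm{Bier}(B_n,\Delta))\ge0$ for all such $i$.
   Context: $B_n$ is the Boolean lattice of subsets of $[1,n]$. A proper ideal $\Delta\subset B_n$ is a nonempty family of subsets of $[1,n]$ closed under taking subsets with $[1,n]\notin\Delta$; $f_i(\Delta)$ is the number of sets of cardinality $i$ in $\Delta$; a subcomplex is a down-closed subfamily. The Bier sphere $\mathrm{Bier}(B_n,\Delta)$ is the simplicial complex whose faces are the pairs $(B,C)$ with $B\subsetneq C\subseteq[1,n]$, $B\in\Delta$, $C\notin\Delta$, with $(B',C')$ a face of $(B,C)$ iff $B'\subseteq B$ and $C\subseteq C'$; the face $(B,C)$ has $|B|+n-|C|$ vertices, and all facets have $n-1$ vertices. For such a complex $\Gamma$, $f_j(\Gamma)$ is the number of faces with $j$ vertices, $h_i(\Gamma):=\sum_{j=0}^{n-1}(-1)^{i+j}\binom{n-1-j}{n-1-i}f_j(\Gamma)$ ($0\le i\le n-1$; $h_i:=0$ otherwise), and $g_i(\Gamma):=h_i(\Gamma)-h_{i-1}(\Gamma)$ for $0\le i\le\lfloor\frac{n-1}2\rfloor$.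 A $K$-sequence is a sequence $(f_0,f_1,\dots)$ that is the $f$-vector (numbers of faces of each cardinality) of some finite simplicial complex. *)

From mathcomp Require Import all_boot all_order all_algebra.
Set Implicit Arguments. Unset Strict Implicit. Unset Printing Implicit Defensive.
Import GRing.Theory Num.Theory.

(* The ground set [1,n] is modelled by 'I_n; B_n = {set 'I_n}. *)

Definition down_closed (T : finType) (D : {set {set T}}) : Prop :=
  forall B C : {set T}, C \in D -> B \subset C -> B \in D.

Definition proper_ideal_Bn (n : nat) (D : {set {set 'I_n}}) : Prop :=
  [/\ D != set0, down_closed D & [set: 'I_n] \notin D].

Definition subcomplex (T : finType) (D' D : {set {set T}}) : Prop :=
  D' \subset D /\ down_closed D'.

Definition fnum (T : finType) (D : {set {set T}}) (i : nat) : nat :=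
  #|[set B in D | #|B| == i]|.

(* f_j(Bier(B_n, D)): faces (B,C), B proper subset of C, B in D, C notin D,
   with |B| + n - |C| = j vertices *)
Definition bier_f (n : nat) (D : {set {set 'I_n}}) (j : nat) : nat :=
  #|[set p : {set 'I_n} * {set 'I_n} |
      [&& p.1 \proper p.2, p.1 \in D, p.2 \notin D & #|p.1| + n - #|p.2| == j]]|.

Definition bier_h (n : nat) (D : {set {set 'I_n}}) (i : nat) : int :=
  if i <= n.-1 then
    (\sum_(j < n) (-1) ^+ (i + j) * ('C(n.-1 - j, n.-1 - i))%:Z * (bier_f D j)%:Z)%R
  else 0%R.

Definition bier_g (n : nat) (D : {set {set 'I_n}}) (i : nat) : int :=
  (bier_h D i - (if i is k.+1 then bier_h D k else 0))%R.

(* K-sequence: the f-vector (numbers of faces of each cardinality, starting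
   with cardinality 0; entries beyond the end of s are 0) of a finite
   simplicial complex, on some finite vertex set 'I_m. *)
Definition K_sequence (s : seq int) : Prop :=
  exists (m : nat) (K : {set {set 'I_m}}),
    down_closed K /\ forall i, ((fnum K i)%:Z = nth 0 s i)%R.

From mathcomp Require Import all_boot all_order all_algebra all_fingroup.
From mathcomp Require Import zify ring.
Set Implicit Arguments. Unset Strict Implicit. Unset Printing Implicit Defensive.
Import GRing.Theory Num.Theory.

(* For i <= (n-1)/2 one has g_i(Bier(B_n, D)) = f_i(D) - f_(n-i)(D): f_j of the Bier
   sphere counts the pairs B \subset C with B in D minus those with C in D, which is
   \sum_(B in D) ('C(n - |B|, n - j) - 'C(|B|, n - j)), and a binomial inversion isolates
   the faces of sizes i and n - i.
   The complements of the faces of D of size > n/2 form a family U of small sets, upward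
   closed among small sets, with f_i(U) = f_(n-i)(D) <= f_i(D) by double counting.  If U
   were contained in D, removing it from the small faces of D would leave the required
   subcomplex.  In general one relabels U by a permutation so that one of its sets becomes
   a face of D, removes the common part from both families and recurses on the rest of U. *)

Section FiniteSets.
Variable T : finType.
Implicit Types (S X Y : {set T}).

Lemma cards_supsets S k :
  #|[set X : {set T} | S \subset X & #|X| == #|S| + k]| = 'C(#|~: S|, k).
Proof.
pose E_ := [set E : {set T} | E \subset ~: S & #|E| == k].
have disjS E : E \in E_ -> [disjoint E & S].
  by rewrite inE disjoints_subset => /andP [].
have -> : [set X : {set T} | S \subset X & #|X| == #|S| + k] = (setU S) @: E_.
  apply/setP => X; rewrite inE; apply/andP/imsetP => [[sSX /eqP cX]|[E EE ->]].
    exists (X :\: S); last by rewrite -{1}(setIidPr sSX) setID.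
    by rewrite inE subsetDr ?subsetT //= cardsD (setIidPr sSX) cX addKn eqxx.
  split; first exact: subsetUl.
  move: (EE); rewrite inE cardsU setIC (disjoint_setI0 (disjS E EE)) cards0 subn0.
  by case/andP=> _ /eqP ->.
rewrite card_in_imset ?cards_draws // => E E' EE EE' eSE.
have SUK F : F \in E_ -> (S :|: F) :\: S = F.
  by move=> /disjS dFS; rewrite setDUl setDv set0U; apply/setDidPl.
by rewrite -(SUK E EE) -(SUK E' EE') eSE.
Qed.

Lemma exists_perm_imset X Y : #|X| = #|Y| -> exists s : {perm T}, s @: X = Y.
Proof.
move=> cXY.
pose sX := enum X ++ enum (~: X); pose sY := enum Y ++ enum (~: Y).
have sizeE (Z : {set T}) : size (enum Z ++ enum (~: Z)) = #|T|.
  by rewrite size_cat -!cardE cardsC.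
have uniqE (Z : {set T}) : uniq (enum Z ++ enum (~: Z)).
  rewrite cat_uniq !enum_uniq andbT /=; apply/hasPn => x.
  by rewrite !mem_enum inE => /negbTE ->.
have memE (Z : {set T}) x : x \in enum Z ++ enum (~: Z).
  by rewrite mem_cat !mem_enum inE orbN.
pose f x := nth x sY (index x sX).
have ltf x : index x sX < size sY by rewrite /sY sizeE -(sizeE X) index_mem memE.
have f_inj : injective f.
  move=> x y; rewrite /f (set_nth_default y) // => /eqP.
  rewrite nth_uniq ?uniqE // => /eqP /(congr1 (nth x sX)).
  by rewrite nth_index ?memE // => ->; rewrite nth_index ?memE.
exists (perm f_inj); apply/eqP; rewrite eqEcard card_imset ?cXY ?leqnn ?andbT;
  last exact: perm_inj.
apply/subsetP => _ /imsetP [x xX ->]; rewrite permE /f.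
have ltX : index x sX < #|X| by rewrite index_cat mem_enum xX cardE index_mem mem_enum.
by rewrite nth_cat -cardE -cXY ltX -(mem_enum (mem Y)) mem_nth // -cardE -cXY.
Qed.
End FiniteSets.

Lemma sum_nat_indicator (I : finType) (A : {set I}) (Q : pred I) :
  \sum_(x in A) (Q x : nat) = #|[set x in A | Q x]|.
Proof. by rewrite -sum1dep_card big_mkcondr /=; apply: eq_bigr => x _; case: (Q x). Qed.

Section FaceNumbers.
Variable T : finType.
Implicit Types (F A U : {set {set T}}).

Lemma fnum0 i : fnum (set0 : {set {set T}}) i = 0.
Proof. by apply/eqP; rewrite cards_eq0; apply/eqP/setP => X; rewrite !inE. Qed.

Lemma fnumID A U i : fnum A i = fnum (A :&: U) i + fnum (A :\: U) i.
Proof.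
rewrite /fnum -(cardsID U); congr (_ + _); apply: eq_card => X; rewrite !inE;
  by case: (X \in U); rewrite ?andbT ?andbF //= andbC.
Qed.

Lemma fnum_card_le F m i :
  fnum [set S in F | #|S| <= m] i = if i <= m then fnum F i else 0.
Proof.
rewrite /fnum; case: leqP => [le_im|lt_mi].
  by apply: eq_card => S; rewrite !inE; case: eqP => [->|]; rewrite ?le_im ?andbF ?andbT.
apply/eqP; rewrite cards_eq0; apply/eqP/setP => S; rewrite !inE.
by case: eqP => [->|]; rewrite ?andbF // leqNgt lt_mi andbF.
Qed.

Lemma fnum_setC F i : i <= #|T| -> fnum [set S | ~: S \in F] i = fnum F (#|T| - i).
Proof.
move=> le_iT; rewrite /fnum -(card_imset _ (@setC_inj T)); apply: eq_card => S.
rewrite -[S in LHS]setCK mem_imset; last exact: setC_inj.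
rewrite !inE setCK; case: (S \in F) => //=.
move: (cardsC S) le_iT; set a := #|S|; set b := #|~: S|; set N := #|T| => cab le_iN.
by apply/eqP/eqP; lia.
Qed.

Lemma down_closed_fnum_le F i : down_closed F -> 2 * i <= #|T| ->
  fnum F (#|T| - i) <= fnum F i.
Proof.
move=> dF le_2iT.
set Fi := [set S in F | #|S| == i]; set Fk := [set X in F | #|X| == #|T| - i].
have bin_pos : 0 < 'C(#|T| - i, i) by rewrite bin_gt0; lia.
have count_sub : \sum_(X in Fk) \sum_(S in Fi) (S \subset X : nat) = #|Fk| * 'C(#|T| - i, i).
  rewrite -sum_nat_const; apply: eq_bigr => X; rewrite inE => /andP [XF /eqP <-].
  rewrite sum_nat_indicator -cards_draws; apply: eq_card => S; rewrite !inE.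
  by case sSX: (S \subset X); rewrite ?andbF ?andbT // (dF _ _ XF sSX).
have count_sup : \sum_(S in Fi) \sum_(X in Fk) (S \subset X : nat) <= #|Fi| * 'C(#|T| - i, i).
  rewrite -sum_nat_const; apply: leq_sum => S; rewrite inE => /andP [_ /eqP cS].
  have cSc : #|~: S| = (#|T| - i)%N by rewrite -cS -(cardsC S) addKn.
  rewrite sum_nat_indicator -bin_sub; last by lia.
  rewrite -cSc -cards_supsets; apply: subset_leq_card; apply/subsetP => X.
  rewrite !inE => /andP [/andP [_ /eqP cX] ->]; rewrite cS cX /=; apply/eqP.
  by rewrite cSc; move: le_2iT; set N := #|T|; lia.
rewrite exchange_big /= count_sub in count_sup.
by rewrite /fnum -/Fi -/Fk -(leq_pmul2r bin_pos).
Qed.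
End FaceNumbers.

Section Compression.
Variables (T : finType) (m : nat).
Implicit Types (S X Y : {set T}) (A U : {set {set T}}).

Definition up_closed_upto U :=
  forall X Y, X \in U -> X \subset Y -> #|Y| <= m -> Y \in U.

Lemma fnum_imset_perm (s : {perm T}) U i : fnum [set s @: X | X : {set T} in U] i = fnum U i.
Proof.
have s_inj := @perm_inj _ s.
rewrite /fnum -[in RHS](card_imset _ (imset_inj s_inj)); apply: eq_card => Y.
rewrite inE; apply/andP/imsetP => [[/imsetP [X XU ->]]|[X]].
  by rewrite card_imset // => cX; exists X; rewrite // inE XU cX.
by rewrite inE => /andP [XU cX] ->; rewrite imset_f // card_imset.
Qed.

Lemma up_closed_imset_perm (s : {perm T}) U :
  up_closed_upto U -> up_closed_upto [set s @: X | X : {set T} in U].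
Proof.
move=> upU _ Y /imsetP [X XU ->] sXY cY.
have sK (Z : {set T}) : s @: (s^-1%g @: Z) = Z.
  by rewrite -imset_comp -[RHS]imset_id; apply: eq_imset => z /=; rewrite permKV.
rewrite -(sK Y) imset_f // (upU X) //; last by rewrite card_imset //; apply: perm_inj.
apply/subsetP => x xX; apply/imsetP; exists (s x); last by rewrite permK.
by apply: (subsetP sXY); rewrite imset_f.
Qed.

Lemma down_closedD A U : down_closed A -> {in A, forall S, #|S| <= m} ->
  up_closed_upto U -> down_closed (A :\: U).
Proof.
move=> dA smallA upU S1 S2; rewrite !inE => /andP [S2U S2A] sS12.
rewrite (dA _ _ S2A sS12) andbT; apply: contra S2U => S1U.
exact: upU S1U sS12 (smallA _ S2A).
Qed.

Lemma up_closedD U A : up_closed_upto U -> down_closed A -> up_closed_upto (U :\: A).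
Proof.
move=> upU dA X Y; rewrite !inE => /andP [XA XU] sXY cY.
by rewrite (upU X) // andbT; apply: contra XA => /dA; apply.
Qed.

Lemma down_closed_subfamily_fnumB A U :
  down_closed A -> {in A, forall S, #|S| <= m} -> up_closed_upto U ->
  (forall i, fnum U i <= fnum A i) ->
  exists2 A' : {set {set T}}, A' \subset A & down_closed A' /\ forall i, fnum A' i + fnum U i = fnum A i.
Proof.
move: {2}#|U| (leqnn #|U|) => k; elim: k A U => [|k IH] A U cU dA smallA upU leUA;
  have [U0|[X XU]] := set_0Vmem U; try by exists A => //; split=> // i; rewrite U0 fnum0 addn0.
  by rewrite (cardD1 X) XU in cU.
have : 0 < fnum A #|X|.
  by apply: leq_trans (leUA _); rewrite card_gt0; apply/set0Pn; exists X; rewrite inE XU /=.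
rewrite card_gt0 => /set0Pn [S]; rewrite inE => /andP [SA /eqP cS].
have [s sXS] := exists_perm_imset (esym cS).
pose sU : {set {set T}} := [set s @: Y | Y : {set T} in U].
have upsU : up_closed_upto sU by apply: up_closed_imset_perm.
have fnum_sU i : fnum sU i = fnum U i by apply: fnum_imset_perm.
have cU' : #|sU :\: A| <= k.
  have cI : 0 < #|sU :&: A| by apply/card_gt0P; exists S; rewrite inE SA -sXS imset_f.
  rewrite cardsD card_imset; last exact/imset_inj/perm_inj.
  by rewrite leq_subLR (leq_trans cU) // -add1n leq_add2r.
have smallA' : {in A :\: sU, forall S, #|S| <= m}.
  by move=> S'; rewrite inE => /andP [_ /smallA].
have leUA' i : fnum (sU :\: A) i <= fnum (A :\: sU) i.
  have := leUA i; rewrite -fnum_sU (fnumID sU A) (fnumID A sU) setIC; lia.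
have [A' sA'A [dA' fA']] := IH _ _ cU' (down_closedD dA smallA upsU) smallA'
  (up_closedD upsU dA) leUA'.
exists A'; first exact: subset_trans sA'A (subsetDl _ _).
split=> // i; have := fA' i; rewrite -fnum_sU (fnumID sU A) (fnumID A sU) setIC; lia.
Qed.
End Compression.

Lemma down_closed_fnum_diff_compl (T : finType) (F : {set {set T}}) :
  0 < #|T| -> down_closed F ->
  exists2 F' : {set {set T}}, F' \subset F & [/\ down_closed F',
    forall i, 2 * i < #|T| -> fnum F' i + fnum F (#|T| - i) = fnum F i &
    forall i, #|T| <= 2 * i -> fnum F' i = 0].
Proof.
move=> T_gt0 dF; set N := #|T|; set m := N.-1 %/ 2.
have small_m i : (i <= m) = (2 * i < N) by rewrite /m; apply/idP/idP; lia.
pose A := [set S in F | #|S| <= m].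
pose U : {set {set T}} := [set S in [set S | ~: S \in F] | #|S| <= m].
have dA : down_closed A.
  move=> S1 S2; rewrite !inE => /andP [S2F le_S2m] sS12.
  by rewrite (dF _ _ S2F sS12) (leq_trans (subset_leq_card sS12)).
have smallA : {in A, forall S : {set T}, #|S| <= m} by move=> S; rewrite inE => /andP [].
have upU : up_closed_upto m U.
  move=> X Y; rewrite !inE => /andP [XF _] sXY ->; rewrite andbT.
  by apply: dF XF _; rewrite setCS.
have fnumA i : fnum A i = if i <= m then fnum F i else 0 by exact: fnum_card_le.
have fnumU i : fnum U i = if i <= m then fnum F (N - i) else 0.
  by rewrite fnum_card_le; case: ifP => // le_im; rewrite fnum_setC //; lia.
have leUA i : fnum U i <= fnum A i.
  rewrite fnumA fnumU; case: ifP => //; rewrite small_m => /ltnW.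
  exact: down_closed_fnum_le.
have [F' sF'A [dF' fF']] := down_closed_subfamily_fnumB dA smallA upU leUA.
exists F'; first by apply/subsetP => S /(subsetP sF'A); rewrite inE => /andP [].
split=> // i => [lt_2iN|le_N2i]; have := fF' i; rewrite fnumA fnumU small_m.
  by rewrite lt_2iN.
by rewrite ltnNge le_N2i addn0.
Qed.

Section Pairs.
Variables (T : finType) (P : pred T) (R : rel T).

Lemma card_pairs_fst :
  #|[set p : T * T | P p.1 && R p.1 p.2]| = \sum_(x | P x) #|[set y | R x y]|.
Proof.
rewrite -sum1dep_card -(pair_big_dep P R (fun _ _ => 1)).
by apply: eq_bigr => x _; rewrite sum1dep_card.
Qed.

Lemma card_pairs_snd :
  #|[set p : T * T | P p.2 && R p.1 p.2]| = \sum_(y | P y) #|[set x | R x y]|.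
Proof.
rewrite -sum1dep_card (reindex_inj (can_inj (@swap_pairK T T))) /=.
rewrite -(pair_big_dep P (fun y x => R x y) (fun _ _ => 1)).
by apply: eq_bigr => y _; rewrite sum1dep_card.
Qed.
End Pairs.

Section BierFaces.
Variables (n : nat) (D : {set {set 'I_n}}).
Implicit Types B C X : {set 'I_n}.

Lemma card_setC_ord X : #|~: X| = n - #|X|.
Proof. by rewrite cardsCs setCK card_ord. Qed.

Lemma card_set_ord_le X : #|X| <= n.
Proof. by have := max_card X; rewrite card_ord. Qed.

Lemma card_bier_cofaces B j : j <= n ->
  #|[set C : {set 'I_n} | B \subset C & #|B| + n - #|C| == j]| = 'C(n - #|B|, n - j).
Proof.
move=> le_jn; rewrite -card_setC_ord -cards_supsets; apply: eq_card => C; rewrite !inE.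
have := card_set_ord_le C; case/boolP: (B \subset C) => //= /subset_leq_card.
by move=> leBC leCn; apply/eqP/eqP; lia.
Qed.

Lemma card_bier_subfaces C j : j <= n ->
  #|[set B : {set 'I_n} | B \subset C & #|B| + n - #|C| == j]| = 'C(#|C|, n - j).
Proof.
move=> le_jn; rewrite -[in RHS](setCK C) -(cards_supsets (~: C)) -(card_imset _ (@setC_inj _)).
apply: eq_card => B; rewrite -{1}(setCK B) mem_imset; last exact: setC_inj.
rewrite !inE subCset !card_setC_ord.
case/boolP: (~: C \subset B) => //= /subset_leq_card; rewrite card_setC_ord => leCB.
move: (card_set_ord_le B) (card_set_ord_le C); set b := #|B|; set c := #|C|.
by move=> leBn leCn; apply/eqP/eqP; lia.
Qed.

(* Count the pairs B \subset C with B in D by |B| + n - |C|: those with C \notin D are the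
   faces of the Bier sphere, the others are the pairs with C in D. *)
Lemma bier_f_sum j : down_closed D -> j <= n ->
  bier_f D j + \sum_(C in D) 'C(#|C|, n - j) = \sum_(B in D) 'C(n - #|B|, n - j).
Proof.
move=> dD le_jn.
pose w B C := #|B| + n - #|C| == j.
rewrite -(eq_bigr _ (fun C _ => card_bier_subfaces C le_jn)).
rewrite -(eq_bigr _ (fun B _ => card_bier_cofaces B le_jn)).
rewrite -(card_pairs_fst (mem D) (fun B C => (B \subset C) && w B C)).
rewrite -(card_pairs_snd (mem D) (fun B C => (B \subset C) && w B C)).
rewrite -[in RHS](cardsID [set p | p.2 \in D]) addnC /bier_f.
congr (_ + _); apply: eq_card => -[B C]; rewrite !inE /=.
  by case CD: (C \in D); case sBC: (B \subset C);
    rewrite ?andbF ?andbT //= (dD _ _ CD sBC).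
rewrite properEneq; case BD: (B \in D); case CD: (C \in D); case: (B \subset C);
  rewrite /= ?andbF ?andbT //.
by case: eqP => // eBC; move: CD; rewrite -eBC BD.
Qed.
End BierFaces.

Lemma mul_bin_sub p a q : q <= a -> a <= p ->
  'C(p, a) * 'C(a, q) = 'C(p, q) * 'C(p - q, a - q).
Proof.
move=> le_qa le_ap; have le_qp := leq_trans le_qa le_ap.
have facts_gt0 : 0 < q`! * (a - q)`! * (p - a)`! by rewrite !muln_gt0 !fact_gt0.
apply/eqP; rewrite -(eqn_pmul2r facts_gt0); apply/eqP.
have e1 := bin_fact le_ap; have e2 := bin_fact le_qa; have e3 := bin_fact le_qp.
have e4 : 'C(p - q, a - q) * ((a - q)`! * (p - a)`!) = (p - q)`!.
  by rewrite -(bin_fact (leq_sub2r q le_ap)) subnBA ?subnK.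
transitivity p`!; first by rewrite -e1 -e2; ring.
by rewrite -e3 -e4; ring.
Qed.

Local Open Scope ring_scope.

Lemma sum_sign_bin r : \sum_(t < r.+1) (-1) ^+ t * ('C(r, t))%:Z = (r == 0%N : nat)%:Z.
Proof.
have := exprD1n (-1 : int) r; rewrite addNr expr0n natz => ->.
by apply: eq_bigr => t _; rewrite -mulr_natr natz.
Qed.

Lemma binomial_inversion p q m : (p <= m)%N ->
  \sum_(a < m.+1) (-1) ^+ (a + q) * ('C(p, a))%:Z * ('C(a, q))%:Z = (p == q : nat)%:Z.
Proof.
move=> le_pm; have [lt_pq|le_qp] := ltnP p q.
  rewrite ltn_eqF //; apply: big1 => a _.
  have [le_ap|lt_pa] := leqP a p; last by rewrite bin_small // mulr0 mul0r.
  by rewrite (@bin_small a q) ?mulr0 // (leq_ltn_trans le_ap lt_pq).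
pose F a := (-1) ^+ (a + q) * ('C(p, a))%:Z * ('C(a, q))%:Z.
have F_shift t : F (t + q)%N = ('C(p, q))%:Z * ((-1) ^+ t * ('C(p - q, t))%:Z).
  have [le_tpq|lt_pqt] := leqP t (p - q); last first.
    by rewrite /F (@bin_small p) ?(@bin_small (p - q)) ?mulr0 ?mul0r //; lia.
  rewrite /F -mulrA -PoszM (mul_bin_sub (leq_addl t q)) ?addnK; last by lia.
  rewrite -addnA addnn -signr_odd oddD odd_double addbF signr_odd PoszM; ring.
change (\sum_(a < m.+1) F a = (p == q : nat)%:Z).
rewrite -(big_mkord xpredT F) (@big_cat_nat _ _ _ q) /=; [|lia|lia].
rewrite big_nat_cond big1 ?add0r => [|a /andP [/andP [_ lt_aq] _]]; last first.
  by rewrite /F (@bin_small a q) ?mulr0.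
rewrite -{1}(add0n q) big_addn (@big_cat_nat _ _ _ (p - q).+1) /=; [|lia|lia].
rewrite [X in _ + X]big_nat_cond [X in _ + X]big1 ?addr0 => [|t /andP [/andP [lt_t _] _]].
  under eq_bigr => t _ do rewrite F_shift.
  rewrite -big_distrr big_mkord sum_sign_bin /=.
  have [->|ne_pq] := eqVneq p q; first by rewrite subnn binn mulr1.
  by rewrite subn_eq0 leqNgt ltn_neqAle eq_sym ne_pq le_qp mulr0.
by rewrite F_shift (@bin_small (p - q)) ?mulr0.
Qed.

Lemma sign_eq_even a b : ~~ odd (a + b) -> (-1) ^+ a = (-1) ^+ b :> int.
Proof.
by rewrite -signr_odd -[RHS]signr_odd oddD; case: (odd a); case: (odd b).
Qed.

Lemma bier_inversion n k i : (k <= n)%N -> (i < n)%N ->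
  \sum_(j < n) (-1) ^+ (i + j) * ('C(n - j, n - i))%:Z * ('C(n - k, n - j))%:Z
  = (k == i : nat)%:Z.
Proof.
move=> le_kn lt_in.
transitivity (\sum_(j < n.+1) (-1) ^+ (i + j) * ('C(n - j, n - i))%:Z * ('C(n - k, n - j))%:Z).
  by rewrite big_ord_recr /= subnn bin0n subn_eq0 leqNgt lt_in mulr0 mul0r addr0.
have -> : (k == i) = (n - k == n - i)%N by apply/eqP/eqP; lia.
rewrite (reindex_inj rev_ord_inj) /= -(@binomial_inversion (n - k) (n - i) n) ?leq_subr //.
apply: eq_bigr => j _; have le_jn : (j <= n)%N by rewrite -ltnS.
rewrite subSS subKn // mulrAC (sign_eq_even (a := i + (n - j)) (b := j + (n - i))) //.
by rewrite (_ : (i + (n - j) + (j + (n - i)) = n.*2)%N) ?odd_double //; lia.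
Qed.

Lemma Posz_sum (I : finType) (P : pred I) (F : I -> nat) :
  (\sum_(i | P i) F i)%N%:Z = \sum_(i | P i) (F i)%:Z.
Proof. by rewrite -natz natr_sum; apply: eq_bigr => i _; rewrite natz. Qed.

Lemma fnumE (T : finType) (D : {set {set T}}) i :
  (fnum D i)%:Z = \sum_(B in D) (#|B| == i : nat)%:Z.
Proof.
by rewrite -Posz_sum sum_nat_indicator.
Qed.

(* Pascal's rule merges h_i - h_(i-1), sums over binomials of n - 1, into one sum. *)
Lemma bier_gE n (D : {set {set 'I_n}}) i : (i < n)%N ->
  bier_g D i = \sum_(j < n) (-1) ^+ (i + j) * ('C(n - j, n - i))%:Z * (bier_f D j)%:Z.
Proof.
case: n D => // d D lt_id.
case: i lt_id => [|i] lt_id.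
  rewrite /bier_g /bier_h /= subr0; apply: eq_bigr => j _; congr (_ * _%:Z * _).
  case: j => [[|j] hj] /=; first by rewrite !subn0 !binn.
  by rewrite !bin_small //; lia.
have lt_id' : (i < d)%N by [].
rewrite /bier_g /bier_h /= lt_id' (ltnW lt_id') -sumrB; apply: eq_bigr => j _.
have e : 'C(d.+1 - j, d.+1 - i.+1) = ('C(d - j, d - i.+1) + 'C(d - j, d - i))%N.
  have lt_jd := ltn_ord j.
  have -> : (d.+1 - j = (d - j).+1)%N by lia.
  have -> : (d.+1 - i.+1 = (d - i.+1).+1)%N by lia.
  by rewrite binS addnC -subSn.
rewrite e PoszD addSn exprS; ring.
Qed.

Section BierVectors.
Variables (n : nat) (D : {set {set 'I_n}}).

Lemma bier_fE j : down_closed D -> (j <= n)%N ->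
  (bier_f D j)%:Z = \sum_(B in D) (('C(n - #|B|, n - j))%:Z - ('C(#|B|, n - j))%:Z).
Proof.
by move=> dD le_jn; rewrite sumrB -!Posz_sum -(bier_f_sum dD le_jn) PoszD addrK.
Qed.

Lemma bier_g_fnum i : down_closed D -> (i < n)%N ->
  bier_g D i = (fnum D i)%:Z - (fnum D (n - i))%:Z.
Proof.
move=> dD lt_in; rewrite bier_gE //.
under eq_bigr => j _ do rewrite (bier_fE dD (ltnW (ltn_ord j))) big_distrr.
rewrite exchange_big /= !fnumE -sumrB; apply: eq_bigr => B _.
have le_Bn := card_set_ord_le B.
under eq_bigr => j _ do rewrite mulrBr -{2}(subKn le_Bn).
rewrite sumrB !bier_inversion ?leq_subr //; congr (_ - Posz (nat_of_bool _)).
by apply/eqP/eqP; lia.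
Qed.
End BierVectors.

Local Close Scope ring_scope.

Theorem corollary12 (n : nat) (D : {set {set 'I_n}}) :
  (2 <= n)%N -> proper_ideal_Bn D ->
  (exists D' : {set {set 'I_n}},
      subcomplex D' D /\
      (forall i : nat, (i <= n.-1 %/ 2)%N -> (bier_g D i = (fnum D' i)%:Z)%R) /\
      (forall i : nat, (n.-1 %/ 2 < i)%N -> fnum D' i = 0%N)) /\
  K_sequence [seq bier_g D i | i <- iota 0 (n.-1 %/ 2).+1] /\
  (forall i : nat, (i <= n.-1 %/ 2)%N -> (0 <= bier_g D i)%R).
Proof.
move=> le2n [_ dD _]; set m := n.-1 %/ 2.
have [|D' sD'D [dD' fD' D'0]] := down_closed_fnum_diff_compl _ dD; first by rewrite card_ord; lia.
rewrite card_ord in fD' D'0.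
have gD' i : i <= m -> (bier_g D i = (fnum D' i)%:Z)%R.
  move=> le_im; have lt_2in : 2 * i < n by move: le_im; rewrite /m; lia.
  by rewrite bier_g_fnum -?(fD' i lt_2in) ?PoszD ?addrK //; lia.
have D'0m i : m < i -> fnum D' i = 0.
  by move=> lt_mi; apply: D'0; move: lt_mi; rewrite /m; lia.
split; first by exists D'.
split; last by move=> i /gD' ->.
exists n, D'; split=> // i; have [le_im|lt_mi] := leqP i m.
  by rewrite (nth_map 0%N) ?size_iota ?nth_iota ?ltnS // gD'.
by rewrite nth_default ?size_map ?size_iota // D'0m.
Qed.
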